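(* Let $\Delta$ be a positive integer, let $$\delta_{\Delta} = \max \left\{\sin \left(\tfrac{\alpha}{2}\right) \cos \left(\Delta \tfrac{\alpha}{2}\right) : 0 < \alpha < \tfrac{2 \pi}{3 \Delta} \right\},$$ and let $\beta \in \bigcup_{a \in \overline{B}(1, \delta_{\Delta})} \frac{1}{a} \overline{B}(1, \delta_{\Delta})$. Then $Z_{\mathrm{Ising}}(G; \beta) \ne 0$ for every graph $G$ with maximum degree at most $\Delta$.
   Context: Graphs are undirected and may have multiple edges or loops. $Z_{\mathrm{Ising}}(G;\beta)=\sum_{\sigma\colon V\to\{0,1\}}\beta^{m(\sigma)}$ with $m(\sigma)$ the number of monochromatic edges of $G=(V,E)$ under $\sigma$. $\overline{B}(x,r)=\{z\in\mathbb{C}:|z-x|\le r\}$, and $\frac1a\overline{B}(1,\delta)=\{w/a: w\in\overline{B}(1,\delta)\}$. *)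

From HB Require Import structures.
From mathcomp Require Import all_boot all_order all_algebra.
From mathcomp Require Import complex.
From mathcomp Require Import all_classical all_reals.
From mathcomp Require Import trigo.
Set Implicit Arguments. Unset Strict Implicit. Unset Printing Implicit Defensive.
Import Order.TTheory GRing.Theory Num.Theory.
Local Open Scope ring_scope.
Local Open Scope classical_set_scope.

(* A (finite) multigraph with loops: vertex type V, edge type E, and an
   endpoint map sending each edge to its (unordered) pair of endpoints,
   stored as an ordered pair; a loop is an edge e with (ends e).1 = (ends e).2. *)

Definition mdegree (V E : finType) (ends : E -> V * V) (v : V) : nat :=
  (\sum_(e : E) (((ends e).1 == v) + ((ends e).2 == v)))%N.

Definition max_degree_le (V E : finType) (ends : E -> V * V) (D : nat) : Prop :=
  forall v : V, (mdegree ends v <= D)%N.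

Definition mono_edges (V E : finType) (ends : E -> V * V) (sigma : V -> bool) : nat :=
  #|[set e : E | sigma (ends e).1 == sigma (ends e).2]|.

Definition Z_Ising (F : nzRingType) (V E : finType) (ends : E -> V * V) (beta : F) : F :=
  \sum_(sigma : {ffun V -> bool}) beta ^+ (mono_edges ends sigma).

(* delta_Delta = max { sin(a/2) cos(Delta a/2) : 0 < a < 2 pi / (3 Delta) },
   taken as the supremum of that set (it is attained). *)
Definition delta_Delta (R : realType) (D : nat) : R :=
  sup [set sin (a / 2) * cos (D%:R * a / 2) | a in
         [set a : R | 0 < a /\ a < 2 * pi / (3 * D%:R)]].

(* Multiplying out, [a ^+ #|E| * Z_Ising (w / a)] is the partition function with
   weight [w] on monochromatic and [a] on bichromatic edges, all in the disc
   [B(1, delta)], where [delta <= sin (th/2) cos (D th/2)] for an angle [th]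
   with [D th <= 2 pi / 3].  For any such edge weights we show, by induction on
   the number of free spins, that the partition function with pinned boundary
   spins is nonzero and that the ratio of its two pinnings at a free vertex
   lies in the sector [|arg| <= D th].  Flipping the spin at [u] exchanges the
   two pinnings at the cost of changing the weights of the at most [D] edges at
   [u], and changing one edge multiplies the partition function by a factor in
   the sector [|arg| <= th]: both values are [Y0 + Y1] times a point of
   [B(1, sin (th/2))], since the pinnings [Y0], [Y1] of the other endpoint have
   their ratio in the [D th]-sector, so [|Y0 + Y1| >= cos (D th/2) (|Y0| + |Y1|)];
   and the quotient of two points of [B(1, sin phi)] has argument at most
   [2 phi]. *)

From mathcomp Require Import all_boot all_order all_algebra.
From mathcomp Require Import complex.
From mathcomp Require Import all_classical all_reals.
From mathcomp Require Import trigo.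
From mathcomp Require Import topology normedtype derive.
From mathcomp Require Import ring lra.
Set Implicit Arguments. Unset Strict Implicit. Unset Printing Implicit Defensive.
Import Order.TTheory GRing.Theory Num.Theory.
Import numFieldNormedType.Exports.
Local Open Scope ring_scope.

Section DeltaAngle.
Local Open Scope classical_set_scope.
Variables (R : realType) (D : nat).

Lemma continuous_delta_profile :
  continuous (fun t : R => sin (t / 2) * cos (D%:R * t / 2)).
Proof.
move=> x; apply: cvgM.
  apply: continuous_comp; last exact: continuous_sin.
  by apply: cvgM; [exact: cvg_id | exact: cvg_cst].
apply: continuous_comp; last exact: continuous_cos.
by apply: cvgM; [apply: cvgM; [exact: cvg_cst | exact: cvg_id] | exact: cvg_cst].
Qed.

Lemma delta_Delta_angle : (0 < D)%N -> exists th : R,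
  [/\ 0 <= th, D%:R * th <= 2 * pi / 3 &
      delta_Delta R D <= sin (th / 2) * cos (D%:R * th / 2)].
Proof.
move=> D_gt0; have D0 : 0 < D%:R :> R by rewrite ltr0n.
pose b : R := 2 * pi / (3 * D%:R).
have b_gt0 : 0 < b by rewrite divr_gt0 ?mulr_gt0 ?pi_gt0 // ltr0n.
have [th] := EVT_max (ltW b_gt0) (continuous_subspaceT continuous_delta_profile).
rewrite in_itv /= => /andP[th_ge0 th_le_b] th_max.
exists th; split => //.
  have -> : 2 * pi / 3 = D%:R * b by rewrite /b; field; rewrite gt_eqF.
  by rewrite ler_pM2l.
apply: ge_sup.
  exists (sin (b / 2 / 2) * cos (D%:R * (b / 2) / 2)); exists (b / 2) => //.
  split; first by rewrite divr_gt0.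
  by rewrite -/b ltr_pdivrMr // ltr_pMr // ltr1n.
move=> _ [a [a_gt0 a_lt_b] <-].
by apply: th_max; rewrite in_itv /= !ltW.
Qed.

End DeltaAngle.

Local Open Scope complex_scope.

Section Sector.
Variable R : realType.
Implicit Types (s t phi psi del : R) (r u : R[i]).

Definition expi t : R[i] := cos t +i* sin t.

Lemma expiD t1 t2 : expi (t1 + t2) = expi t1 * expi t2.
Proof. by rewrite /expi cosD sinD; simpc; congr (_ +i* _); ring. Qed.

Lemma expi0 : expi 0 = 1.
Proof. by rewrite /expi cos0 sin0. Qed.

Lemma norm_expi t : `|expi t| = 1.
Proof. by rewrite normc_def /= cos2Dsin2 sqrtr1. Qed.

Lemma expi_neq0 t : expi t != 0.
Proof. by rewrite -normr_eq0 norm_expi oner_eq0. Qed.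

Definition sector psi r := exists s t, [/\ 0 < s, `|t| <= psi & r = s%:C * expi t].

Definition sector_multiple psi (X Y : R[i]) := exists2 r, sector psi r & X = r * Y.

Lemma sector0 : sector 0 1.
Proof. by exists 1, 0; rewrite expi0 normr0 mulr1. Qed.

Lemma sectorM phi psi r1 r2 : sector phi r1 -> sector psi r2 -> sector (phi + psi) (r1 * r2).
Proof.
move=> [s1 [t1 [s1_gt0 t1_le ->]]] [s2 [t2 [s2_gt0 t2_le ->]]].
exists (s1 * s2), (t1 + t2); split; first exact: mulr_gt0.
  exact: le_trans (ler_normD _ _) (lerD t1_le t2_le).
by rewrite expiD rmorphM /=; ring.
Qed.

Lemma sector_le phi psi r : phi <= psi -> sector phi r -> sector psi r.
Proof.
by move=> le_phi [s [t [s_gt0 t_le ->]]]; exists s, t; split => //; exact: le_trans le_phi.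
Qed.

Lemma ball1_neq0 del u : del < 1 -> `|u - 1| <= del%:C -> u != 0.
Proof.
move=> del_lt1 hu; apply/eqP => u0; move: hu; rewrite u0 sub0r normrN normr1.
by rewrite -[1]/(1%:C) lecR; lra.
Qed.

Lemma ler_cos_norm t psi : `|t| <= psi -> psi <= pi -> cos psi <= cos t.
Proof.
move=> t_le psi_le_pi; have psi_ge0 : 0 <= psi by exact: le_trans t_le.
rewrite -(cos_norm t) leNgt ltr_cos ?in_itv /= ?normr_ge0 ?psi_ge0 ?psi_le_pi //.
  by rewrite -leNgt.
exact: le_trans t_le psi_le_pi.
Qed.

(* [|1 + s e^(it)|^2 = 1 + 2 s cos t + s^2] and [cos t >= cos psi = 2 cos^2(psi/2) - 1]. *)
Lemma norm1D_sector psi r : psi <= pi -> sector psi r ->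
  (cos (psi / 2))%:C * (1 + `|r|) <= `|1 + r|.
Proof.
move=> psi_le_pi [s [t [s_gt0 t_le r_def]]].
have -> : `|r| = s%:C by rewrite r_def normrM norm_expi mulr1 ger0_norm ?ler0c ?ltW.
have psi_ge0 : 0 <= psi by exact: le_trans t_le.
have cos_t := ler_cos_norm t_le psi_le_pi.
have c_ge0 : 0 <= cos (psi / 2) by apply: cos_ge0_pihalf; apply/andP; split; lra.
have cos_psi : cos psi = cos (psi / 2) ^+ 2 *+ 2 - 1.
  by rewrite -cos_mulr2n; congr cos; rewrite mulr2n; field.
have -> : (cos (psi / 2))%:C * (1 + s%:C) = (cos (psi / 2) * (1 + s))%:C.
  by rewrite rmorphM rmorphD rmorph1.
rewrite r_def /expi normc_def /= lecR !mul0r subr0 add0r addr0.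
have sq : (cos (psi / 2) * (1 + s)) ^+ 2 <= (1 + s * cos t) ^+ 2 + (s * sin t) ^+ 2.
  have -> : (1 + s * cos t) ^+ 2 + (s * sin t) ^+ 2 =
            1 + 2 * s * cos t + s ^+ 2 * (cos t ^+ 2 + sin t ^+ 2) by ring.
  rewrite cos2Dsin2 mulr1.
  have h1 : 0 <= s * (cos t - cos psi) by apply: mulr_ge0; lra.
  have h2 : 0 <= (1 - s) ^+ 2 * (1 - cos (psi / 2) ^+ 2).
    apply: mulr_ge0; first exact: sqr_ge0.
    by have := cos_le1 (psi / 2); rewrite subr_ge0; nra.
  rewrite cos_psi in h1; nra.
rewrite -(ger0_norm (mulr_ge0 c_ge0 (addr_ge0 ler01 (ltW s_gt0)))) -sqrtr_sqr.
by rewrite ler_sqrt // addr_ge0 ?sqr_ge0.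
Qed.

Lemma ball_arg_bound phi x y : 0 <= phi -> phi < pi / 2 ->
  `|x +i* y - 1| <= (sin phi)%:C -> 0 < x /\ `|cos phi * y| <= sin phi * x.
Proof.
move=> phi_ge0 phi_lt; rewrite normc_def /= lecR subr0 => hxy.
have pi_gt0 : 0 < pi :> R := pi_gt0 R.
have cos_gt0 : 0 < cos phi by apply: cos_gt0_pihalf; apply/andP; split; lra.
have sin_ge0 : 0 <= sin phi by apply: sin_ge0_pi; apply/andP; split; lra.
have sq_ge0 : 0 <= (x - 1) ^+ 2 + y ^+ 2 by rewrite addr_ge0 ?sqr_ge0.
have {hxy} disc : (x - 1) ^+ 2 + y ^+ 2 <= sin phi ^+ 2.
  by rewrite -(sqr_sqrtr sq_ge0) ler_sqr ?nnegrE ?sqrtr_ge0.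
have pyth := cos2Dsin2 phi.
have x_gt0 : 0 < x by nra.
split => //.
have sq : (cos phi * y) ^+ 2 <= (sin phi * x) ^+ 2.
  have e : (sin phi * x) ^+ 2 - cos phi ^+ 2 * (sin phi ^+ 2 - (x - 1) ^+ 2)
           = (x - cos phi ^+ 2) ^+ 2.
    rewrite exprMn; have -> : sin phi ^+ 2 = 1 - cos phi ^+ 2 by lra.
    ring.
  have := sqr_ge0 (x - cos phi ^+ 2); rewrite -e => h.
  have : cos phi ^+ 2 * y ^+ 2 <= cos phi ^+ 2 * (sin phi ^+ 2 - (x - 1) ^+ 2).
    by apply: ler_wpM2l; [exact: sqr_ge0 | lra].
  by rewrite exprMn; lra.
have sx_ge0 := mulr_ge0 sin_ge0 (ltW x_gt0).
by rewrite ler_norml; apply/andP; split; nra.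
Qed.

Lemma ball_sector phi u : 0 <= phi -> phi < pi / 2 -> `|u - 1| <= (sin phi)%:C ->
  sector phi u.
Proof.
case: u => x y phi_ge0 phi_lt /(ball_arg_bound phi_ge0 phi_lt) [x_gt0].
rewrite ler_norml => /andP[lo hi].
have pi_gt0 : 0 < pi :> R := pi_gt0 R.
have cos_gt0 : 0 < cos phi by apply: cos_gt0_pihalf; apply/andP; split; lra.
have phi_in : phi \in `](- (pi / 2)), (pi / 2)[ by rewrite in_itv /=; apply/andP; split; lra.
have Nphi_in : - phi \in `](- (pi / 2)), (pi / 2)[ by rewrite in_itv /=; apply/andP; split; lra.
have tan_phi : tan phi = (sin phi * x) / (cos phi * x) by rewrite /tan; field; rewrite !gt_eqF.
have yx : y / x = (cos phi * y) / (cos phi * x) by field; rewrite !gt_eqF.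
have cx_pos : 0 <= (cos phi * x)^-1 by rewrite invr_ge0 ltW // mulr_gt0.
pose t := atan (y / x).
have cos_t_gt0 : 0 < cos t.
  by apply: cos_gt0_pihalf; rewrite atan_gtNpi2 atan_ltpi2.
exists (x / cos t), t; split; first exact: divr_gt0.
  rewrite ler_norml; apply/andP; split.
    by rewrite -(tanK Nphi_in) /t; apply: le_atan; rewrite tanN tan_phi yx -mulNr ler_wpM2r.
  by rewrite -(tanK phi_in) /t; apply: le_atan; rewrite tan_phi yx ler_wpM2r.
apply/eqP; rewrite eq_complex /= !mul0r subr0 addr0; apply/andP; split; apply/eqP.
  by rewrite mulrVK // unitfE gt_eqF.
by rewrite -mulrA [_^-1 * _]mulrC -/(tan t) /t atanK mulrC mulrVK // unitfE gt_eqF.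
Qed.

Lemma ball_div_sector phi u1 u2 : 0 <= phi -> phi < pi / 2 ->
  `|u1 - 1| <= (sin phi)%:C -> `|u2 - 1| <= (sin phi)%:C -> sector (phi + phi) (u2 / u1).
Proof.
move=> phi_ge0 phi_lt /(ball_sector phi_ge0 phi_lt) [s1 [t1 [s1_gt0 t1_le ->]]].
move=> /(ball_sector phi_ge0 phi_lt) [s2 [t2 [s2_gt0 t2_le ->]]].
exists (s2 / s1), (t2 - t1); split; first exact: divr_gt0.
  by apply: le_trans (ler_normB _ _) _; rewrite addrC lerD.
have -> : expi t2 = expi (t2 - t1) * expi t1 by rewrite -expiD subrK.
have s1_neq0 : s1%:C != 0 by rewrite eq_complex /= negb_and gt_eqF.
by rewrite rmorphM fmorphV /=; field; rewrite s1_neq0 expi_neq0.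
Qed.

Lemma ball_average del rho c (Y0 Y1 a0 a1 : R[i]) :
  0 < c -> 0 <= rho -> del <= rho * c -> Y0 + Y1 != 0 ->
  c%:C * (`|Y0| + `|Y1|) <= `|Y0 + Y1| ->
  `|a0 - 1| <= del%:C -> `|a1 - 1| <= del%:C ->
  `|(a0 * Y0 + a1 * Y1) / (Y0 + Y1) - 1| <= rho%:C.
Proof.
move=> c_gt0 rho_ge0 del_le S_neq0 hS ha0 ha1.
have -> : (a0 * Y0 + a1 * Y1) / (Y0 + Y1) - 1 = ((a0 - 1) * Y0 + (a1 - 1) * Y1) / (Y0 + Y1).
  by field.
rewrite normrM normfV ler_pdivrMr ?normr_gt0 //.
apply: le_trans (ler_normD _ _) _; rewrite !normrM.
apply: le_trans (_ : del%:C * (`|Y0| + `|Y1|) <= _).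
  by rewrite mulrDr lerD // ler_wpM2r ?normr_ge0.
apply: le_trans (_ : (rho * c)%:C * (`|Y0| + `|Y1|) <= _).
  by rewrite ler_wpM2r ?addr_ge0 ?normr_ge0 ?lecR.
by rewrite rmorphM -mulrA ler_wpM2l ?ler0c.
Qed.

Lemma sector_multiple_refl (X : R[i]) : sector_multiple 0 X X.
Proof. by exists 1; rewrite ?mul1r //; exact: sector0. Qed.

Lemma sector_multiple_trans phi psi (X Y Z : R[i]) :
  sector_multiple phi X Y -> sector_multiple psi Y Z -> sector_multiple (phi + psi) X Z.
Proof.
move=> [r1 r1_sector ->] [r2 r2_sector ->].
by exists (r1 * r2); [exact: sectorM | rewrite mulrA].
Qed.

Lemma sector_multiple_le phi psi (X Y : R[i]) :
  phi <= psi -> sector_multiple phi X Y -> sector_multiple psi X Y.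
Proof. by move=> le_phi [r r_sector ->]; exists r => //; exact: sector_le r_sector. Qed.

Lemma norm_sector_sum psi (Y0 Y1 : R[i]) : psi <= pi -> sector_multiple psi Y1 Y0 ->
  (cos (psi / 2))%:C * (`|Y0| + `|Y1|) <= `|Y0 + Y1|.
Proof.
move=> psi_le_pi [r r_sector ->].
have -> : Y0 + r * Y0 = (1 + r) * Y0 by ring.
rewrite !normrM -{1}(mul1r `|Y0|) -mulrDl mulrA.
by rewrite ler_wpM2r ?normr_ge0 ?norm1D_sector.
Qed.

Lemma sector_sum_neq0 psi (Y0 Y1 : R[i]) : psi <= pi -> 0 < cos (psi / 2) ->
  Y0 != 0 -> sector_multiple psi Y1 Y0 -> Y0 + Y1 != 0.
Proof.
move=> psi_le_pi c_gt0 Y0_neq0 Y1_sector.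
rewrite -normr_gt0; apply: lt_le_trans (norm_sector_sum psi_le_pi Y1_sector).
by rewrite mulr_gt0 ?ltcR // ltr_pwDl ?normr_ge0 ?normr_gt0.
Qed.

(* Both sums are [Y0 + Y1] times a point of [B(1, sin (th/2))]. *)
Lemma sector_average_ratio th psi del (Y0 Y1 p0 p1 q0 q1 : R[i]) :
  0 <= th -> th < pi -> psi <= pi -> 0 < cos (psi / 2) ->
  del <= sin (th / 2) * cos (psi / 2) ->
  Y0 != 0 -> sector_multiple psi Y1 Y0 ->
  `|p0 - 1| <= del%:C -> `|p1 - 1| <= del%:C ->
  `|q0 - 1| <= del%:C -> `|q1 - 1| <= del%:C ->
  sector_multiple th (p0 * Y0 + p1 * Y1) (q0 * Y0 + q1 * Y1).
Proof.
move=> th_ge0 th_lt_pi psi_le_pi c_gt0 del_le Y0_neq0 Y1_sector hp0 hp1 hq0 hq1.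
have pi_gt0 : 0 < pi :> R := pi_gt0 R.
have th2_ge0 : 0 <= th / 2 by lra.
have th2_lt : th / 2 < pi / 2 by lra.
have rho_ge0 : 0 <= sin (th / 2) by apply: sin_ge0_pi; apply/andP; split; lra.
have rho_lt1 : sin (th / 2) < 1.
  have : 0 < cos (th / 2) by apply: cos_gt0_pihalf; apply/andP; split; lra.
  by have := cos2Dsin2 (th / 2); nra.
have S_neq0 := sector_sum_neq0 psi_le_pi c_gt0 Y0_neq0 Y1_sector.
have average a0 a1 := ball_average c_gt0 rho_ge0 del_le S_neq0
  (norm_sector_sum psi_le_pi Y1_sector) (a0 := a0) (a1 := a1).
have uP := average _ _ hp0 hp1; have uQ := average _ _ hq0 hq1.
set P := p0 * Y0 + _ in uP *; set Q := q0 * Y0 + _ in uQ *; set S := Y0 + Y1 in uP uQ S_neq0.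
have Q_neq0 : Q != 0.
  by apply: contraNneq (ball1_neq0 rho_lt1 uQ) => ->; rewrite mul0r.
exists ((P / S) / (Q / S)); last by field; rewrite S_neq0 Q_neq0.
by rewrite [in sector th](splitr th); exact: ball_div_sector.
Qed.

End Sector.

Section PinnedPartitionFunction.
Variables (R : realType) (V E : finType) (ends : E -> V * V).
Local Notation C := R[i].
Implicit Types (A : E -> bool -> bool -> C) (F : {set V}) (tau : V -> bool).

Definition weight A (sg : V -> bool) : C :=
  \prod_(e : E) A e (sg (ends e).1) (sg (ends e).2).

Definition agrees_off F tau (sg : {ffun V -> bool}) :=
  [forall w, (w \notin F) ==> (sg w == tau w)].

Definition Zpin A F tau : C :=
  \sum_(sg : {ffun V -> bool} | agrees_off F tau sg) weight A sg.

Definition pin tau v b : V -> bool := fun w => if w == v then b else tau w.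

Definition incident v := [pred e | ((ends e).1 == v) || ((ends e).2 == v)].

Definition delete_edge A e := fun e' x y => if e' == e then 1 else A e' x y.

Definition force_edge v e A := fun e' x y =>
  if e' == e then A e (if (ends e).1 == v then true else x)
                      (if (ends e).2 == v then true else y)
  else A e' x y.

Definition force_edges v s A := foldr (force_edge v) A s.

Definition ising_weights (a w : C) : E -> bool -> bool -> C :=
  fun _ x y => if x == y then w else a.

Lemma delete_force_edge v e A : delete_edge (force_edge v e A) e = delete_edge A e.
Proof.
apply/funext => e'; apply/funext => x; apply/funext => y.
by rewrite /delete_edge /force_edge /=; case: ifP => // ->.
Qed.

Lemma agrees_off_pin F tau v b (sg : {ffun V -> bool}) : v \in F ->
  agrees_off F tau sg && (sg v == b) = agrees_off (F :\ v) (pin tau v b) sg.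
Proof.
move=> vF; apply/idP/forallP => [/andP[/forallP ag /eqP <-] w | ag].
  rewrite in_setD1 negb_and negbK /pin.
  by case: (eqVneq w v) => [->|_] //=; exact: ag.
apply/andP; split; last by have := ag v; rewrite in_setD1 eqxx /pin eqxx.
apply/forallP => w; apply/implyP => wF.
have wv : w != v by apply: contraNneq wF => ->.
by have := ag w; rewrite in_setD1 wv wF /pin (negbTE wv).
Qed.

Lemma Zpin_split A F tau v : v \in F ->
  Zpin A F tau = Zpin A (F :\ v) (pin tau v false) + Zpin A (F :\ v) (pin tau v true).
Proof.
move=> vF; rewrite /Zpin (bigID (fun sg : {ffun V -> bool} => sg v)) /= addrC.
by congr (_ + _); apply: eq_bigl => sg; rewrite -agrees_off_pin // ?eqbF_neg ?eqb_id.
Qed.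

Lemma Zpin_delete_edge A F tau e : (ends e).1 \notin F -> (ends e).2 \notin F ->
  Zpin A F tau = A e (tau (ends e).1) (tau (ends e).2) * Zpin (delete_edge A e) F tau.
Proof.
move=> e1F e2F; rewrite /Zpin mulr_sumr; apply: eq_bigr => sg /forallP ag.
rewrite /weight (bigD1 e) //= [in RHS](bigD1 e) //= /delete_edge eqxx mul1r.
rewrite (eqP (implyP (ag _) e1F)) (eqP (implyP (ag _) e2F)).
by congr (_ * _); apply: eq_bigr => e' /negbTE ->.
Qed.

Lemma Zpin_set0 A tau : Zpin A finset.set0 tau = weight A [ffun w => tau w].
Proof.
rewrite /Zpin (big_pred1 [ffun w => tau w]) // => sg /=.
apply/forallP/eqP => [ag|->]; last by move=> w; rewrite ffunE eqxx implybT.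
by apply/ffunP => w; rewrite ffunE; have := ag w; rewrite finset.in_set0 => /eqP.
Qed.

Lemma Zpin_setT A tau : Zpin A [set: V] tau = \sum_(sg : {ffun V -> bool}) weight A sg.
Proof. by apply: eq_bigl => sg; apply/forallP => w; rewrite finset.in_setT. Qed.

Lemma force_edgesE v s A e x y : force_edges v s A e x y =
  if e \in s then A e (if (ends e).1 == v then true else x)
                      (if (ends e).2 == v then true else y)
  else A e x y.
Proof.
elim: s e x y => [|e' s IHs] e x y //=; rewrite /force_edge in_cons.
case: (eqVneq e e') => [->|_] /=; last exact: IHs.
by rewrite IHs; case: ifP => // _; case: ((ends e').1 == v); case: ((ends e').2 == v).
Qed.

Definition flip v (sg : {ffun V -> bool}) : {ffun V -> bool} :=
  [ffun w => if w == v then ~~ sg w else sg w].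

Lemma flipK v : involutive (flip v).
Proof.
move=> sg; apply/ffunP => w; rewrite !ffunE.
by case: (eqVneq w v) => //= ->; rewrite negbK.
Qed.

Lemma Zpin_flip A F tau v : v \notin F ->
  Zpin A F (pin tau v true) = Zpin (force_edges v (enum (incident v)) A) F (pin tau v false).
Proof.
move=> vF; rewrite /Zpin (reindex_inj (inv_inj (flipK v))) /=.
apply: eq_big => sg.
  by apply/forallP/forallP => ag w; have := ag w; rewrite /pin ffunE;
    case: (eqVneq w v) => [->|_] //=; rewrite vF /=; case: (sg v).
move=> ag; have sg_v : sg v = false.
  by move/forallP: ag => /(_ v); rewrite vF /pin ffunE !eqxx /=; case: (sg v).
apply: eq_bigr => e _; rewrite force_edgesE mem_enum !ffunE inE.
by case: (eqVneq (ends e).1 v) => [->|_]; case: (eqVneq (ends e).2 v) => [->|_];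
  rewrite /= ?sg_v ?eqxx.
Qed.

Lemma card_incident v : (#|incident v| <= mdegree ends v)%N.
Proof.
rewrite -sum1_card /mdegree big_mkcond /=; apply: leq_sum => e _.
by rewrite inE; case: ((ends e).1 == v); case: ((ends e).2 == v).
Qed.

Lemma weight_ising (a w : C) (sg : V -> bool) : a != 0 ->
  weight (ising_weights a w) sg = a ^+ #|E| * (w / a) ^+ mono_edges ends sg.
Proof.
move=> a_neq0; rewrite /weight /mono_edges.
rewrite (eq_bigr (fun e => a * (if sg (ends e).1 == sg (ends e).2 then w / a else 1))); last first.
  by move=> e _; rewrite /ising_weights; case: ifP; rewrite ?mulr1 // mulrC divfK.
rewrite big_split /= prodr_const cardT -cardE; congr (_ * _).
by rewrite -big_mkcond /= -prodr_const; apply: eq_bigl => e; rewrite unfold_in /= asboolb.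
Qed.

Lemma Zpin_ising (a w : C) tau : a != 0 ->
  Zpin (ising_weights a w) [set: V] tau = a ^+ #|E| * Z_Ising ends (w / a).
Proof.
move=> a_neq0; rewrite Zpin_setT /Z_Ising mulr_sumr.
by apply: eq_bigr => sg _; rewrite weight_ising.
Qed.

End PinnedPartitionFunction.

Section ZeroFreeness.
Variables (R : realType) (V E : finType) (ends : E -> V * V).
Variables (D : nat) (th del : R).
Hypothesis D_gt0 : (0 < D)%N.
Hypothesis th_ge0 : 0 <= th.
Hypothesis Dth_le : D%:R * th <= 2 * pi / 3.
Hypothesis del_ge0 : 0 <= del.
Hypothesis del_le : del <= sin (th / 2) * cos (D%:R * th / 2).
Hypothesis max_deg : max_degree_le ends D.
Local Notation C := R[i].
Local Notation psi := (D%:R * th).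
Implicit Types (A : E -> bool -> bool -> C) (F : {set V}) (tau : V -> bool).

Let pi_gt0 : 0 < pi :> R := pi_gt0 R.

Let th_le_psi : th <= psi.
Proof. by rewrite -{1}(mul1r th) ler_wpM2r // ler1n. Qed.

Let psi_le_pi : psi <= pi.
Proof. by have := pi_gt0; have := Dth_le; lra. Qed.

Let th_lt_pi : th < pi.
Proof. by have := pi_gt0; have := th_le_psi; have := Dth_le; lra. Qed.

Let cos_psi2_gt0 : 0 < cos (psi / 2).
Proof.
have psi_ge0 : 0 <= psi by rewrite mulr_ge0.
by apply: cos_gt0_pihalf; apply/andP; split; have := pi_gt0; have := Dth_le; lra.
Qed.

Let th2_ge0 : 0 <= th / 2.
Proof. by have := th_ge0; lra. Qed.

Let th2_lt_pi2 : th / 2 < pi / 2.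
Proof. by have := th_lt_pi; lra. Qed.

Let sin_th2_ge0 : 0 <= sin (th / 2).
Proof.
by apply: sin_ge0_pi; apply/andP; split; have := th2_ge0; have := th2_lt_pi2; have := pi_gt0; lra.
Qed.

Let sin_th2_lt1 : sin (th / 2) < 1.
Proof.
have : 0 < cos (th / 2).
  by apply: cos_gt0_pihalf; apply/andP; split; have := th2_lt_pi2; have := th2_ge0; lra.
by have := cos2Dsin2 (th / 2); have := sin_th2_ge0; nra.
Qed.

Let del_le_sin : del <= sin (th / 2).
Proof.
by have := cos_le1 (psi / 2); have := del_le; have := sin_th2_ge0; have := cos_psi2_gt0; nra.
Qed.

Lemma del_lt1 : del < 1.
Proof. exact: le_lt_trans del_le_sin sin_th2_lt1. Qed.

Definition in_ball A := forall e x y, `|A e x y - 1| <= del%:C.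

Lemma in_ball_delete_edge A e : in_ball A -> in_ball (delete_edge A e).
Proof.
move=> A_ball e' x y; rewrite /delete_edge; case: ifP => _; last exact: A_ball.
by rewrite subrr normr0 ler0c.
Qed.

Lemma in_ball_force_edge A v e : in_ball A -> in_ball (force_edge ends v e A).
Proof. by move=> A_ball e' x y; rewrite /force_edge; case: ifP. Qed.

Lemma in_ball_force_edges A v s : in_ball A -> in_ball (force_edges ends v s A).
Proof. by move=> A_ball; elim: s => [|e s IHs] //=; exact: in_ball_force_edge. Qed.

Lemma weight_neq0 A sg : in_ball A -> weight ends A sg != 0.
Proof. by move=> A_ball; apply/prodf_neq0 => e _; exact: ball1_neq0 del_lt1 _. Qed.

Definition sector_invariant m := forall A F tau, in_ball A -> (#|F| <= m)%N ->
  Zpin ends A F tau != 0 /\ forall u, u \in F ->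
    sector_multiple psi (Zpin ends A (F :\ u) (pin tau u true))
                        (Zpin ends A (F :\ u) (pin tau u false)).

Lemma force_edge_pinned_ends A F tau v e : in_ball A ->
  (ends e).1 \notin F -> (ends e).2 \notin F ->
  sector_multiple th (Zpin ends (force_edge ends v e A) F tau) (Zpin ends A F tau).
Proof.
move=> A_ball e1F e2F.
rewrite (Zpin_delete_edge (force_edge ends v e A) tau e1F e2F) (Zpin_delete_edge A tau e1F e2F).
rewrite delete_force_edge.
set c' := force_edge _ _ _ _ _ _ _; set c := A e _ _.
have ball_sin a : `|a - 1| <= del%:C -> `|a - 1| <= (sin (th / 2))%:C.
  by move=> ha; apply: le_trans ha _; rewrite lecR.
have c_ball : `|c - 1| <= (sin (th / 2))%:C by exact/ball_sin/A_ball.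
have c'_ball : `|c' - 1| <= (sin (th / 2))%:C.
  by rewrite /c' /force_edge eqxx; exact/ball_sin/A_ball.
have c_neq0 : c != 0 := ball1_neq0 del_lt1 (A_ball _ _ _).
exists (c' / c); last by rewrite mulrA divfK.
by rewrite [in sector th](splitr th); exact: ball_div_sector th2_ge0 th2_lt_pi2 c_ball c'_ball.
Qed.

Lemma force_edge_free_end m A F tau u v e :
  sector_invariant m -> in_ball A -> (#|F| <= m)%N -> u \in F -> v \notin F ->
  (ends e).1 \in [:: u; v] -> (ends e).2 \in [:: u; v] ->
  sector_multiple th (Zpin ends (force_edge ends v e A) F tau) (Zpin ends A F tau).
Proof.
move=> IH A_ball Fm uF vF e1uv e2uv.
have off_F' w : w \in [:: u; v] -> w \notin F :\ u.
  by rewrite !inE => /orP[] /eqP ->; rewrite ?eqxx // (negbTE vF) andbF.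
have [e1F' e2F'] := (off_F' _ e1uv, off_F' _ e2uv).
rewrite (Zpin_split ends (force_edge ends v e A) tau uF) (Zpin_split ends A tau uF).
rewrite !(Zpin_delete_edge (force_edge ends v e A) _ e1F' e2F').
rewrite !(Zpin_delete_edge A _ e1F' e2F') delete_force_edge.
have A'_ball := in_ball_delete_edge e A_ball.
have [_ /(_ u uF) ratio] := IH _ F tau A'_ball Fm.
have F'm : (#|F :\ u| <= m)%N by apply: leq_trans Fm; rewrite (cardsD1 u F) uF.
have [Y0_neq0 _] := IH _ (F :\ u) (pin tau u false) A'_ball F'm.
have force_ball := in_ball_force_edge v e A_ball.
exact: sector_average_ratio th_ge0 th_lt_pi psi_le_pi cos_psi2_gt0 del_le Y0_neq0 ratio
  (force_ball _ _ _) (force_ball _ _ _) (A_ball _ _ _) (A_ball _ _ _).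
Qed.

Lemma force_edge_sector m A F tau v e :
  sector_invariant m -> in_ball A -> (#|F| <= m)%N -> v \notin F -> e \in incident ends v ->
  sector_multiple th (Zpin ends (force_edge ends v e A) F tau) (Zpin ends A F tau).
Proof.
move=> IH A_ball Fm vF; rewrite inE => e_v.
pose u := if (ends e).1 == v then (ends e).2 else (ends e).1.
have e1uv : (ends e).1 \in [:: u; v].
  by rewrite !inE /u; case: (eqVneq (ends e).1 v) => [->|_]; rewrite ?eqxx ?orbT.
have e2uv : (ends e).2 \in [:: u; v].
  by move: e_v; rewrite !inE /u; case: (eqVneq (ends e).1 v) => [_|_ /= ->];
    rewrite ?eqxx ?orbT.
have [uF|uF] := boolP (u \in F); first exact: force_edge_free_end _ IH A_ball Fm uF vF e1uv e2uv.
have off_F w : w \in [:: u; v] -> w \notin F by rewrite !inE => /orP[] /eqP ->.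
exact: force_edge_pinned_ends _ _ A_ball (off_F _ e1uv) (off_F _ e2uv).
Qed.

Lemma force_edges_sector m A F tau v s :
  sector_invariant m -> in_ball A -> (#|F| <= m)%N -> v \notin F -> all (incident ends v) s ->
  sector_multiple ((size s)%:R * th) (Zpin ends (force_edges ends v s A) F tau) (Zpin ends A F tau).
Proof.
move=> IH A_ball Fm vF; elim: s => [_|e s IHs] /=.
  by rewrite mul0r; exact: sector_multiple_refl.
case/andP => e_v /IHs s_sector; rewrite -add1n natrD mulrDl mul1r.
apply: sector_multiple_trans s_sector.
exact: force_edge_sector _ IH (in_ball_force_edges _ _ A_ball) Fm vF e_v.
Qed.

Lemma pin_ratio_sector n A F tau u :
  sector_invariant n -> in_ball A -> (#|F| <= n.+1)%N -> u \in F ->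
  sector_multiple psi (Zpin ends A (F :\ u) (pin tau u true))
                      (Zpin ends A (F :\ u) (pin tau u false)).
Proof.
move=> IH A_ball Fn uF.
have F'n : (#|F :\ u| <= n)%N by move: Fn; rewrite (cardsD1 u F) uF.
have uF' : u \notin F :\ u by rewrite in_setD1 eqxx.
have all_incident : all (incident ends u) (enum (incident ends u)).
  by apply/allP => e; rewrite mem_enum.
rewrite Zpin_flip //.
apply: sector_multiple_le _ (force_edges_sector _ IH A_ball F'n uF' all_incident).
by rewrite ler_wpM2r // ler_nat -cardE (leq_trans (card_incident _ _) (max_deg _)).
Qed.

Lemma sector_invariant_all n : sector_invariant n.
Proof.
elim: n => [|n IH] A F tau A_ball Fn.
  have -> : F = finset.set0 by apply: cards0_eq; apply/eqP; rewrite -leqn0.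
  by split => [|u]; rewrite ?Zpin_set0 ?weight_neq0 ?finset.in_set0.
split => [|u uF]; last exact: pin_ratio_sector _ IH A_ball Fn uF.
have [->|[u uF]] := set_0Vmem F; first by rewrite Zpin_set0 weight_neq0.
have F'n : (#|F :\ u| <= n)%N by move: Fn; rewrite (cardsD1 u F) uF.
have [Y0_neq0 _] := IH A (F :\ u) (pin tau u false) A_ball F'n.
rewrite (Zpin_split ends A tau uF).
exact: sector_sum_neq0 psi_le_pi cos_psi2_gt0 Y0_neq0 (pin_ratio_sector _ IH A_ball Fn uF).
Qed.

End ZeroFreeness.

Theorem corollary2p8 (R : realType) (D : nat) (beta : R[i]) :
  (0 < D)%N ->
  (exists a : R[i], `|a - 1| <= (delta_Delta R D)%:C /\
     exists w : R[i], `|w - 1| <= (delta_Delta R D)%:C /\ beta = w / a) ->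
  forall (V E : finType) (ends : E -> V * V),
    max_degree_le ends D -> Z_Ising ends beta != 0.
Proof.
move=> D_gt0 [a [a_ball [w [w_ball ->]]]] V E ends max_deg.
have [th [th_ge0 Dth_le del_le]] := delta_Delta_angle R D_gt0.
have del_ge0 : 0 <= delta_Delta R D by rewrite -ler0c (le_trans (normr_ge0 _) a_ball).
have a_neq0 := ball1_neq0 (del_lt1 D_gt0 th_ge0 Dth_le del_le) a_ball.
have weights_ball : in_ball (delta_Delta R D) (@ising_weights R E a w).
  by move=> e [] []; rewrite /ising_weights.
have [Z_neq0 _] := sector_invariant_all D_gt0 th_ge0 Dth_le del_ge0 del_le max_deg
  (fun _ => false) weights_ball (leqnn #|[set: V]|).
by move: Z_neq0; rewrite Zpin_ising // mulf_eq0 negb_or => /andP[_].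
Qed.
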